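(* Let $f\in\mathcal{H}_{\rm fin}$ be not identically zero and bi-$A(\widehat{\mathbb{Z}})$-invariant. Suppose $\mathrm{supp}\,f\subseteq ZK'$ for a compact open subgroup $K'$ of $\mathrm{GL}_2(\mathbb{A}_{\rm fin})$ with $ZK'=\phi(y,x)$, where $y\in\mathbb{Q}_+$ and $x\in\mathbb{A}_{\rm fin}/\widehat{\mathbb{Z}}$ is represented so that for each prime $p$ either $x_p=0$ or $v_p(x_p)<0$. If $v_2(x)\ne-1$, then $\mathrm{supp}\,f\subseteq a(y)^{-1}ZK\,a(y)$ (i.e. $f$ satisfies geometric assumption (ii) and $y$ controls the support of $f$).
   Context: $\mathcal{H}_{\rm fin}$ is the space of locally constant functions on $\mathrm{GL}_2(\mathbb{A}_{\rm fin})$ invariant under and compactly supported modulo the center $Z=Z(\mathbb{A}_{\rm fin})$. $K=\mathrm{GL}_2(\widehat{\mathbb{Z}})$, $a(y)=\mathrm{diag}(y,1)$, $A(\widehat{\mathbb{Z}})=\{a(u):u\in\widehat{\mathbb{Z}}^\times\}$, and $\phi(y,x)=\begin{pmatrix}y&x\\0&1\end{pmatrix}^{-1}ZK\begin{pmatrix}y&x\\0&1\end{pmatrix}$. Geometric assumption (ii) for $f$ means: $\mathrm{supp}\,f\subseteq a(y)^{-1}ZKa(y)$ for some $y\in\mathbb{Q}_+$; such $y$ is said to control the support of $f$. *)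

(* A concrete, setoid-style model of the finite adeles of Q
   and of GL_2(A_fin). *)
From mathcomp Require Import all_boot all_order all_algebra.
Set Implicit Arguments. Unset Strict Implicit. Unset Printing Implicit Defensive.
Import Order.TTheory GRing.Theory Num.Theory.
Local Open Scope ring_scope.

(** Profinite integers Zhat = lim Z/nZ : a representative is a compatible
    family of integers z n (meaningful modulo n, for n > 0). *)
Definition zhat := nat -> int.
Definition zhat_valid (z : zhat) : Prop :=
  forall m n : nat, (0 < m)%N -> (0 < n)%N -> (m %| n)%N ->
    (m%:Z %| z n - z m)%Z.

(** Finite adeles A_fin = Zhat[1/N] : the pair (N, z) represents z / N. *)
Record afin := AF { af_den : nat ; af_num : zhat }.
Definition af_valid (x : afin) : Prop :=
  (0 < af_den x)%N /\ zhat_valid (af_num x).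
(* equality of adeles: (N,z) = (M,w) iff M z = N w in Zhat *)
Definition af_eq (x y : afin) : Prop :=
  forall n : nat, (0 < n)%N ->
    (n%:Z %| (af_den y)%:Z * af_num x n - (af_den x)%:Z * af_num y n)%Z.
Definition af_of_rat (r : rat) : afin :=
  AF (`|denq r|)%N (fun _ => numq r).
Definition af_add (x y : afin) : afin :=
  AF (af_den x * af_den y)%N
     (fun n => (af_den y)%:Z * af_num x n + (af_den x)%:Z * af_num y n).
Definition af_opp (x : afin) : afin := AF (af_den x) (fun n => - af_num x n).
Definition af_sub (x y : afin) : afin := af_add x (af_opp y).
Definition af_mul (x y : afin) : afin :=
  AF (af_den x * af_den y)%N (fun n => af_num x n * af_num y n).
Definition af0 : afin := af_of_rat 0.
Definition af1 : afin := af_of_rat 1.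
Definition af_in_zhat (x : afin) : Prop :=
  ((af_den x)%:Z %| af_num x (af_den x))%Z.
Definition af_unit (x : afin) : Prop :=
  exists e, af_valid e /\ af_eq (af_mul x e) af1.
Definition zhat_unit (x : afin) : Prop :=
  af_in_zhat x /\ exists e, af_valid e /\ af_in_zhat e /\ af_eq (af_mul x e) af1.
Definition af_in_Zp (p : nat) (x : afin) : Prop :=
  exists d : nat, (0 < d)%N /\ ~~ (p %| d)%N /\
    af_in_zhat (af_mul (af_of_rat d%:R) x).
(* the p-component x_p is 0 (i.e. lies in p^k Z_p for all k) *)
Definition af_p_zero (p : nat) (x : afin) : Prop :=
  forall k : nat, af_in_Zp p (af_mul (af_of_rat ((p ^ k)%N%:R)^-1) x).
(* v_p(x_p) = -1 *)
Definition af_val_m1 (p : nat) (x : afin) : Prop :=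
  af_in_Zp p (af_mul (af_of_rat p%:R) x) /\ ~ af_in_Zp p x.

Record mat2 := M2 { m11 : afin ; m12 : afin ; m21 : afin ; m22 : afin }.
Definition mat_valid (g : mat2) : Prop :=
  [/\ af_valid (m11 g), af_valid (m12 g), af_valid (m21 g) & af_valid (m22 g)].
Definition mat_eq (g h : mat2) : Prop :=
  [/\ af_eq (m11 g) (m11 h), af_eq (m12 g) (m12 h),
      af_eq (m21 g) (m21 h) & af_eq (m22 g) (m22 h)].
Definition mat_mul (g h : mat2) : mat2 :=
  M2 (af_add (af_mul (m11 g) (m11 h)) (af_mul (m12 g) (m21 h)))
     (af_add (af_mul (m11 g) (m12 h)) (af_mul (m12 g) (m22 h)))
     (af_add (af_mul (m21 g) (m11 h)) (af_mul (m22 g) (m21 h)))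
     (af_add (af_mul (m21 g) (m12 h)) (af_mul (m22 g) (m22 h))).
Definition mat_scal (t : afin) (g : mat2) : mat2 :=
  M2 (af_mul t (m11 g)) (af_mul t (m12 g)) (af_mul t (m21 g)) (af_mul t (m22 g)).
Definition mat_det (g : mat2) : afin :=
  af_sub (af_mul (m11 g) (m22 g)) (af_mul (m12 g) (m21 g)).

Definition inGL2 (g : mat2) : Prop := mat_valid g /\ af_unit (mat_det g).
Definition inK (g : mat2) : Prop :=
  mat_valid g /\ zhat_unit (mat_det g) /\
  [/\ af_in_zhat (m11 g), af_in_zhat (m12 g),
      af_in_zhat (m21 g) & af_in_zhat (m22 g)].
Definition inKN (N : nat) (g : mat2) : Prop :=
  let iN := af_of_rat (N%:R)^-1 in
  [/\ inK g, af_in_zhat (af_mul iN (af_sub (m11 g) af1)), af_in_zhat (af_mul iN (m12 g)),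
      af_in_zhat (af_mul iN (m21 g)) & af_in_zhat (af_mul iN (af_sub (m22 g) af1))].
(* g in Z K, Z = center = scalar matrices with entries in A_fin^x *)
Definition inZK (g : mat2) : Prop :=
  exists t, af_valid t /\ af_unit t /\ inK (mat_scal t g).

Definition amat (u : afin) : mat2 := M2 u af0 af0 af1.
Definition hmat (y : rat) (x : afin) : mat2 := M2 (af_of_rat y) x af0 af1.
Definition hinv (y : rat) (x : afin) : mat2 :=
  M2 (af_of_rat y^-1) (af_opp (af_mul (af_of_rat y^-1) x)) af0 af1.
(* g in phi(y,x) = [[y,x],[0,1]]^-1 Z K [[y,x],[0,1]] *)
Definition in_phi (y : rat) (x : afin) (g : mat2) : Prop :=
  inZK (mat_mul (mat_mul (hmat y x) g) (hinv y x)).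

Definition in_Hfin (C : numClosedFieldType) (f : mat2 -> C) : Prop :=
  (* f is a function on GL_2(A_fin) *)
  (forall g h, inGL2 g -> inGL2 h -> mat_eq g h -> f g = f h) /\
  (forall t g, af_valid t -> af_unit t -> inGL2 g -> f (mat_scal t g) = f g) /\
  (* locally constant *)
  (forall g, inGL2 g -> exists N : nat, (0 < N)%N /\
       forall k, inKN N k -> f (mat_mul g k) = f g) /\
  (* compactly supported modulo Z: support covered by finitely many Z g K *)
  (exists (n : nat) (gs : nat -> mat2), (forall i, (i < n)%N -> inGL2 (gs i)) /\
     forall g, inGL2 g -> f g != 0 ->
       exists2 i, (i < n)%N & exists t k, let h := gs i in [/\ af_valid t, af_unit t, inK k &
                          mat_eq g (mat_scal t (mat_mul h k))]).

Definition biA_invariant (C : numClosedFieldType) (f : mat2 -> C) : Prop :=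
  forall u g, af_valid u -> zhat_unit u -> inGL2 g ->
    f (mat_mul (amat u) g) = f g /\ f (mat_mul g (amat u)) = f g.

(* Write h = [[y, x], [0, 1]].  Since f (g a(-1)) = f g <> 0, both P = t1 h g h^-1 and
   Q = t2 h g a(-1) h^-1 lie in K for suitable central t1, t2.  As h a(-1) h^-1 = [[-1, 2x], [0, 1]],
   the matrix adj(P) Q of K equals c [[-1, 2x], [0, 1]] with c = t1 t2 det g; its determinant -c^2
   is a unit of Zhat, hence so is c, and 2x is integral.  When v_2(x) <> -1 this forces x into Zhat,
   and then t1 h0 g h0^-1 = [[1, -x], [0, 1]] P [[1, x], [0, 1]] lies in K, where h0 = a(y). *)

From Stdlib Require Import Classical.
From mathcomp Require Import all_boot all_order all_algebra ring.
Set Implicit Arguments. Unset Strict Implicit. Unset Printing Implicit Defensive.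
Import Order.TTheory GRing.Theory Num.Theory.
Local Open Scope ring_scope.

(* For fixed n it is a ring morphism on representatives with positive denominators, and
   membership in Zhat as well as [af_eq] are read off from its values at levels n divisible
   by the denominators. *)
Definition ev (n : nat) (x : afin) : rat := (af_num x n)%:~R / (af_den x)%:R.

Lemma af_den_gt0 x : af_valid x -> (0 < af_den x)%N.
Proof. by case. Qed.

Lemma af_den_neq0 x : (0 < af_den x)%N -> (af_den x)%:R != 0 :> rat.
Proof. by rewrite pnatr_eq0 -lt0n. Qed.

Lemma ev_rat n r : ev n (af_of_rat r) = r.
Proof.
rewrite /ev /af_of_rat /= -[(`|denq r|%N)%:R]/((`|denq r|%:Z)%:~R).
by rewrite gez0_abs ?denq_ge0 // divq_num_den.
Qed.

Lemma evD n x y : (0 < af_den x)%N -> (0 < af_den y)%N ->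
  ev n (af_add x y) = ev n x + ev n y.
Proof.
move=> /af_den_neq0 hx /af_den_neq0 hy.
rewrite /ev /af_add /= natrM rmorphD !rmorphM /=.
by field; apply/andP.
Qed.

Lemma evM n x y : (0 < af_den x)%N -> (0 < af_den y)%N ->
  ev n (af_mul x y) = ev n x * ev n y.
Proof.
move=> /af_den_neq0 hx /af_den_neq0 hy.
rewrite /ev /af_mul /= natrM rmorphM /=.
by field; apply/andP.
Qed.

Lemma evN n x : ev n (af_opp x) = - ev n x.
Proof. by rewrite /ev /af_opp /= rmorphN mulNr. Qed.

Lemma ev_mul_den n x : (0 < af_den x)%N -> ev n x * (af_den x)%:R = (af_num x n)%:~R.
Proof. by move=> /af_den_neq0 hx; rewrite /ev mulfVK. Qed.

Lemma af_validD x y : af_valid x -> af_valid y -> af_valid (af_add x y).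
Proof.
move=> [hx zx] [hy zy]; split; first by rewrite /af_add /= muln_gt0 hx hy.
move=> m n hm hn hmn; rewrite /af_add /=.
have -> : (af_den y)%:Z * af_num x n + (af_den x)%:Z * af_num y n -
   ((af_den y)%:Z * af_num x m + (af_den x)%:Z * af_num y m) =
   (af_den y)%:Z * (af_num x n - af_num x m) + (af_den x)%:Z * (af_num y n - af_num y m) by ring.
by apply: rpredD; apply: dvdz_mull; [apply: zx | apply: zy].
Qed.

Lemma af_validM x y : af_valid x -> af_valid y -> af_valid (af_mul x y).
Proof.
move=> [hx zx] [hy zy]; split; first by rewrite /af_mul /= muln_gt0 hx hy.
move=> m n hm hn hmn; rewrite /af_mul /=.
have -> : af_num x n * af_num y n - af_num x m * af_num y m =
   af_num x n * (af_num y n - af_num y m) + af_num y m * (af_num x n - af_num x m) by ring.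
by apply: rpredD; apply: dvdz_mull; [apply: zy | apply: zx].
Qed.

Lemma af_validN x : af_valid x -> af_valid (af_opp x).
Proof.
by move=> [hx zx]; split => // m n hm hn hmn; rewrite /af_opp /= -opprD rpredN zx.
Qed.

Lemma af_valid_rat r : af_valid (af_of_rat r).
Proof.
split; first by rewrite /af_of_rat /= absz_gt0 denq_neq0.
by move=> m n _ _ _; rewrite /af_of_rat /= subrr dvdz0.
Qed.

Ltac af_valid_tac := repeat match goal with
  | |- af_valid (af_add _ _) => apply: af_validD
  | |- af_valid (af_mul _ _) => apply: af_validM
  | |- af_valid (af_opp _) => apply: af_validN
  | |- af_valid (af_sub _ _) => apply: af_validD
  | |- af_valid (af_of_rat _) => apply: af_valid_rat
  | |- af_valid af0 => apply: af_valid_rat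
  | |- af_valid af1 => apply: af_valid_rat
  | |- af_valid _ => assumption
  end.

Ltac mat_valid_tac := split; cbn [m11 m12 m21 m22]; af_valid_tac.

Ltac ev_simpl := rewrite ?/mat_det ?/af_sub ?/af0 ?/af1; cbn [m11 m12 m21 m22];
  rewrite ?(evD, evM, evN, ev_rat); try (apply: af_den_gt0; af_valid_tac).

Lemma af_in_zhat_ev x n : af_valid x -> (0 < n)%N -> (af_den x %| n)%N ->
  af_in_zhat x <-> ev n x \is a Num.int.
Proof.
move=> [hx zx] hn hxn.
have -> : af_in_zhat x <-> ((af_den x)%:Z %| af_num x n)%Z.
  have -> : af_num x n = (af_num x n - af_num x (af_den x)) + af_num x (af_den x) by ring.
  by rewrite /af_in_zhat rpredDl ?zx.
split=> [/dvdzP [k hk] | /intrP [k hk]].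
  by rewrite /ev hk rmorphM /= pmulrn mulfK ?af_den_neq0 // intr_int.
apply/dvdzP; exists k; apply: (@intr_inj rat).
by rewrite rmorphM /= -pmulrn -hk ev_mul_den.
Qed.

Definition same_ev (x y : afin) : Prop := forall n, ev n x = ev n y.

Lemma same_ev_cross n x y : (0 < af_den x)%N -> (0 < af_den y)%N -> ev n x = ev n y ->
  (af_den y)%:Z * af_num x n = (af_den x)%:Z * af_num y n.
Proof.
move=> hx hy e; apply: (@intr_inj rat); rewrite !rmorphM /= -!pmulrn.
by rewrite -(ev_mul_den n hx) -(ev_mul_den n hy) e; ring.
Qed.

Lemma af_eq_same_ev x y : (0 < af_den x)%N -> (0 < af_den y)%N -> same_ev x y -> af_eq x y.
Proof. by move=> hx hy e n _; rewrite (same_ev_cross hx hy (e n)) subrr dvdz0. Qed.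

(* The cross-multiplied congruences only give n | D_y (...); passing through the
   level n * D_y and back by compatibility removes the factor D_y. *)
Lemma af_eq_trans x y z : af_valid x -> af_valid y -> af_valid z ->
  af_eq x y -> af_eq y z -> af_eq x z.
Proof.
move=> [hx vx] [hy vy] [hz vz] exy eyz n hn.
set m := (n * af_den y)%N.
have hm : (0 < m)%N by rewrite muln_gt0 hn hy.
have hnm : (n %| m)%N by apply: dvdn_mulr.
have hy0 : (af_den y)%:Z != 0 by rewrite eqz_nat -lt0n.
have at_m : (n%:Z %| (af_den z)%:Z * af_num x m - (af_den x)%:Z * af_num z m)%Z.
  rewrite -(dvdz_mul2r hy0) -PoszM.
  have -> : ((af_den z)%:Z * af_num x m - (af_den x)%:Z * af_num z m) * (af_den y)%:Z =
    (af_den z)%:Z * ((af_den y)%:Z * af_num x m - (af_den x)%:Z * af_num y m)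
    + (af_den x)%:Z * ((af_den z)%:Z * af_num y m - (af_den y)%:Z * af_num z m) by ring.
  by apply: rpredD; apply: dvdz_mull; [apply: exy | apply: eyz].
have -> : (af_den z)%:Z * af_num x n - (af_den x)%:Z * af_num z n =
  ((af_den z)%:Z * af_num x m - (af_den x)%:Z * af_num z m)
  - (af_den z)%:Z * (af_num x m - af_num x n) + (af_den x)%:Z * (af_num z m - af_num z n) by ring.
apply: rpredD; first apply: rpredB => //.
- by apply: dvdz_mull; apply: vx.
- by apply: dvdz_mull; apply: vz.
Qed.

Lemma af_eq1_same_ev x y : af_valid x -> af_valid y ->
  same_ev x y -> af_eq x af1 -> af_eq y af1.
Proof.
move=> vx vy e; apply: (@af_eq_trans y x) => //; first exact: af_valid_rat.
by apply: af_eq_same_ev; rewrite ?af_den_gt0 // => n; rewrite e.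
Qed.

Lemma af_eq1_mul x y : af_eq x af1 -> af_eq y af1 -> af_eq (af_mul x y) af1.
Proof.
move=> ex ey n hn; move: (ex n hn) (ey n hn); rewrite /af_mul /af1 /= !mul1r !mulr1.
move=> dx dy; rewrite PoszM.
have -> : af_num x n * af_num y n - (af_den x)%:Z * (af_den y)%:Z =
  af_num x n * (af_num y n - (af_den y)%:Z) + (af_den y)%:Z * (af_num x n - (af_den x)%:Z) by ring.
by apply: rpredD; apply: dvdz_mull.
Qed.

Lemma ev_af_eq1 x m n : (0 < af_den x)%N -> af_eq x af1 -> (0 < n)%N ->
  (m * af_den x %| n)%N -> exists k : int, ev n x = 1 + m%:R * k%:~R.
Proof.
move=> hx e hn /dvdnP [q hq].
have /dvdzP [j hj] := e n hn; move: hj; rewrite /af1 /= mul1r mulr1 => hj.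
exists (j * q); apply: (mulIf (af_den_neq0 hx)).
rewrite ev_mul_den // -[af_num x n](subrK (af_den x)%:Z) hj hq !PoszM rmorphD !rmorphM /= -!pmulrn.
ring.
Qed.

Lemma af_in_zhat_same_ev x y : af_valid x -> af_valid y -> same_ev x y ->
  af_in_zhat x -> af_in_zhat y.
Proof.
move=> vx vy e.
have hn : (0 < af_den x * af_den y)%N by rewrite muln_gt0 !af_den_gt0.
rewrite (af_in_zhat_ev vx hn (dvdn_mulr _ (dvdnn _))).
by rewrite (af_in_zhat_ev vy hn (dvdn_mull _ (dvdnn _))) e.
Qed.

Lemma af_in_zhatD x y : af_valid x -> af_valid y ->
  af_in_zhat x -> af_in_zhat y -> af_in_zhat (af_add x y).
Proof.
move=> vx vy; have vxy : af_valid (af_add x y) by af_valid_tac.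
have hn := af_den_gt0 vxy.
rewrite (af_in_zhat_ev vx hn (dvdn_mulr _ (dvdnn _))) (af_in_zhat_ev vy hn (dvdn_mull _ (dvdnn _))).
by rewrite (af_in_zhat_ev vxy hn (dvdnn _)) evD ?af_den_gt0 //; apply: rpredD.
Qed.

Lemma af_in_zhatM x y : af_valid x -> af_valid y ->
  af_in_zhat x -> af_in_zhat y -> af_in_zhat (af_mul x y).
Proof.
move=> vx vy; have vxy : af_valid (af_mul x y) by af_valid_tac.
have hn := af_den_gt0 vxy.
rewrite (af_in_zhat_ev vx hn (dvdn_mulr _ (dvdnn _))) (af_in_zhat_ev vy hn (dvdn_mull _ (dvdnn _))).
by rewrite (af_in_zhat_ev vxy hn (dvdnn _)) evM ?af_den_gt0 //; apply: rpredM.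
Qed.

Lemma af_in_zhatN x : af_valid x -> af_in_zhat x -> af_in_zhat (af_opp x).
Proof.
move=> vx; have vnx : af_valid (af_opp x) by af_valid_tac.
have hn := af_den_gt0 vx.
by rewrite (af_in_zhat_ev vx hn (dvdnn _)) (af_in_zhat_ev vnx hn (dvdnn _)) evN rpredN.
Qed.

Lemma af_in_zhat_rat r : r \is a Num.int -> af_in_zhat (af_of_rat r).
Proof.
have vr := af_valid_rat r.
by rewrite (af_in_zhat_ev vr (af_den_gt0 vr) (dvdnn _)) ev_rat.
Qed.

Lemma zhat_unit_same_ev x y : af_valid x -> af_valid y -> same_ev x y ->
  zhat_unit x -> zhat_unit y.
Proof.
move=> vx vy e [zx [u [vu [zu xu1]]]]; split; first exact: af_in_zhat_same_ev zx.
exists u; split=> //; split=> //; apply: af_eq1_same_ev xu1; try af_valid_tac.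
by move=> n; ev_simpl; rewrite e.
Qed.

Lemma zhat_unitM x y : af_valid x -> af_valid y ->
  zhat_unit x -> zhat_unit y -> zhat_unit (af_mul x y).
Proof.
move=> vx vy [zx [u [vu [zu xu1]]]] [zy [v [vv [zv yv1]]]].
split; first exact: af_in_zhatM.
exists (af_mul u v); split; first by af_valid_tac.
split; first exact: af_in_zhatM.
apply: af_eq1_same_ev (af_eq1_mul xu1 yv1); try af_valid_tac.
by move=> n; ev_simpl; ring.
Qed.

Lemma zhat_unit_factor x y : af_valid x -> af_valid y -> af_in_zhat x -> af_in_zhat y ->
  zhat_unit (af_mul x y) -> zhat_unit x.
Proof.
move=> vx vy zx zy [_ [u [vu [zu xyu1]]]]; split=> //.
exists (af_mul y u); split; first by af_valid_tac.
split; first exact: af_in_zhatM.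
apply: af_eq1_same_ev xyu1; try af_valid_tac.
by move=> n; ev_simpl; ring.
Qed.

Lemma zhat_unit_rat r : r != 0 -> r \is a Num.int -> r^-1 \is a Num.int ->
  zhat_unit (af_of_rat r).
Proof.
move=> r0 ri rVi; split; first exact: af_in_zhat_rat.
exists (af_of_rat r^-1); split; first exact: af_valid_rat.
split; first exact: af_in_zhat_rat.
apply: af_eq_same_ev; rewrite ?af_den_gt0 //; try af_valid_tac.
by move=> n; ev_simpl; rewrite mulfV.
Qed.

(* u e = 1 + D_x k at a level divisible by D_x D_u D_e, and D_x x is integral there,
   so x = e (u x) - k (D_x x) is integral. *)
Lemma af_in_zhat_cancel u x : af_valid u -> af_valid x -> zhat_unit u ->
  af_in_zhat (af_mul u x) -> af_in_zhat x.
Proof.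
move=> vu vx [_ [e [ve [ze ue1]]]] zux.
have vue : af_valid (af_mul u e) by af_valid_tac.
have vux : af_valid (af_mul u x) by af_valid_tac.
set L := (af_den u * af_den e * af_den x)%N.
have hL : (0 < L)%N by rewrite !muln_gt0 !af_den_gt0.
have [k hk] : exists k : int, ev L (af_mul u e) = 1 + (af_den x)%:R * k%:~R.
  by apply: ev_af_eq1; rewrite ?af_den_gt0 // /L mulnC.
move: ze zux; rewrite (af_in_zhat_ev ve hL (dvdn_mulr _ (dvdn_mull _ (dvdnn _)))).
rewrite (af_in_zhat_ev vux hL _); last by rewrite /L mulnAC dvdn_mulr.
rewrite (af_in_zhat_ev vx hL (dvdn_mull _ (dvdnn _))) => ze zux.
have -> : ev L x = ev L e * ev L (af_mul u x) - k%:~R * (af_num x L)%:~R.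
  move: hk; rewrite -(ev_mul_den L (af_den_gt0 vx)); ev_simpl => hk.
  by rewrite mulrCA mulrA hk; ring.
by apply: rpredB; apply: rpredM => //; apply: intr_int.
Qed.

Lemma int_of_coprime_multiples (m d : nat) (r : rat) : coprime m d ->
  m%:R * r \is a Num.int -> d%:R * r \is a Num.int -> r \is a Num.int.
Proof.
move=> cop mr dr; have [u [v huv]] := Bezoutz m d.
have uv1 : u * m%:Z + v * d%:Z = 1 by rewrite huv /gcdz /= (eqP cop).
have -> : r = (u * m%:Z + v * d%:Z)%:~R * r by rewrite uv1 mul1r.
rewrite rmorphD !rmorphM /= -!pmulrn mulrDl -!mulrA.
by apply: rpredD; apply: rpredM => //; apply: intr_int.
Qed.

Lemma af_in_zhat_coprime (m d : nat) x : af_valid x -> coprime m d ->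
  af_in_zhat (af_mul (af_of_rat m%:R) x) -> af_in_zhat (af_mul (af_of_rat d%:R) x) ->
  af_in_zhat x.
Proof.
move=> vx cop.
have vmx : af_valid (af_mul (af_of_rat m%:R) x) by af_valid_tac.
have vdx : af_valid (af_mul (af_of_rat d%:R) x) by af_valid_tac.
set L := (af_den (af_mul (af_of_rat m%:R) x) * af_den (af_mul (af_of_rat d%:R) x))%N.
have hL : (0 < L)%N by rewrite muln_gt0 !af_den_gt0.
rewrite (af_in_zhat_ev vmx hL (dvdn_mulr _ (dvdnn _))).
rewrite (af_in_zhat_ev vdx hL (dvdn_mull _ (dvdnn _))).
rewrite (af_in_zhat_ev vx hL (dvdn_mulr _ (dvdn_mull _ (dvdnn _)))).
by ev_simpl; apply: int_of_coprime_multiples.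
Qed.

Lemma af_in_zhat_of_twice x : af_valid x ->
  af_in_zhat (af_mul (af_of_rat 2%:R) x) -> ~ af_val_m1 2 x -> af_in_zhat x.
Proof.
move=> vx z2x not_v2.
have [d [_ [odd_d zdx]]] : af_in_Zp 2 x.
  apply: NNPP => not_Z2; apply: not_v2; split=> //.
  exists 1%N; do 2!split=> //; apply: (af_in_zhat_same_ev _ _ _ z2x); try af_valid_tac.
  by move=> n; ev_simpl; rewrite mul1r.
by apply: (af_in_zhat_coprime (m := 2)) zdx; rewrite ?prime_coprime.
Qed.

Definition mat_same_ev (g h : mat2) : Prop :=
  [/\ same_ev (m11 g) (m11 h), same_ev (m12 g) (m12 h),
      same_ev (m21 g) (m21 h) & same_ev (m22 g) (m22 h)].

Definition mat_adj (g : mat2) : mat2 :=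
  M2 (m22 g) (af_opp (m12 g)) (af_opp (m21 g)) (m11 g).

Definition unipotent (x : afin) : mat2 := M2 af1 x af0 af1.

Definition hconj (y : rat) (x : afin) (g : mat2) (t : afin) : mat2 :=
  mat_scal t (mat_mul (mat_mul (hmat y x) g) (hinv y x)).

Lemma mat_validM g h : mat_valid g -> mat_valid h -> mat_valid (mat_mul g h).
Proof. by move=> [? ? ? ?] [? ? ? ?]; rewrite /mat_mul; mat_valid_tac. Qed.

Lemma mat_valid_adj g : mat_valid g -> mat_valid (mat_adj g).
Proof. by move=> [? ? ? ?]; rewrite /mat_adj; mat_valid_tac. Qed.

Lemma mat_valid_unipotent x : af_valid x -> mat_valid (unipotent x).
Proof. by move=> vx; rewrite /unipotent; mat_valid_tac. Qed.

Lemma af_valid_det g : mat_valid g -> af_valid (mat_det g).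
Proof. by move=> [? ? ? ?]; rewrite /mat_det /af_sub; af_valid_tac. Qed.

Lemma inK_same_ev g h : mat_valid h -> mat_same_ev g h -> inK g -> inK h.
Proof.
move=> vh [e11 e12 e21 e22] [vg [ug [z11 z12 z21 z22]]].
have [v11 v12 v21 v22] := vg; have [w11 w12 w21 w22] := vh.
split=> //; split.
  apply: (zhat_unit_same_ev _ _ _ ug); rewrite /mat_det /af_sub; try af_valid_tac.
  by move=> n; ev_simpl; rewrite e11 e12 e21 e22.
split; [exact: af_in_zhat_same_ev v11 w11 e11 z11 | exact: af_in_zhat_same_ev v12 w12 e12 z12
      | exact: af_in_zhat_same_ev v21 w21 e21 z21 | exact: af_in_zhat_same_ev v22 w22 e22 z22].
Qed.

Lemma inKM g h : inK g -> inK h -> inK (mat_mul g h).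
Proof.
move=> [vg [ug [z11 z12 z21 z22]]] [vh [uh [w11 w12 w21 w22]]].
have [v11 v12 v21 v22] := vg; have [u11 u12 u21 u22] := vh.
split; first exact: mat_validM.
split.
  have vdg := af_valid_det vg; have vdh := af_valid_det vh.
  apply: (zhat_unit_same_ev _ (af_valid_det (mat_validM vg vh)) _ (zhat_unitM vdg vdh ug uh)).
    exact: af_validM.
  by move=> n; rewrite /mat_mul; ev_simpl; ring.
by split; apply: af_in_zhatD; try af_valid_tac; apply: af_in_zhatM.
Qed.

Lemma inK_adj g : inK g -> inK (mat_adj g).
Proof.
move=> [vg [ug [z11 z12 z21 z22]]]; have [v11 v12 v21 v22] := vg.
split; first exact: mat_valid_adj.
split; last by split=> //; apply: af_in_zhatN.
apply: (zhat_unit_same_ev (af_valid_det vg) (af_valid_det (mat_valid_adj vg)) _ ug).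
by move=> n; rewrite /mat_adj; ev_simpl; ring.
Qed.

Lemma inK_unipotent x : af_valid x -> af_in_zhat x -> inK (unipotent x).
Proof.
move=> vx zx; split; first exact: mat_valid_unipotent.
split; last by split=> //; apply: af_in_zhat_rat; rewrite ?rpred0 ?rpred1.
apply: (zhat_unit_same_ev (af_valid_rat 1) (af_valid_det (mat_valid_unipotent vx))).
- by move=> n; rewrite /unipotent; ev_simpl; ring.
- by apply: zhat_unit_rat; rewrite ?invr1 ?rpred1 ?oner_neq0.
Qed.

Lemma mat_valid_hconj y x g t : af_valid x -> mat_valid g -> af_valid t ->
  mat_valid (hconj y x g t).
Proof.
by move=> vx [? ? ? ?] vt; rewrite /hconj /mat_scal /mat_mul /hmat /hinv; mat_valid_tac. Qed.

Lemma ev_hconj n y x g t : y != 0 -> af_valid x -> mat_valid g -> af_valid t ->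
  let P := hconj y x g t in
  [/\ ev n (m11 P) = ev n t * (ev n (m11 g) + ev n x * ev n (m21 g) / y),
      ev n (m12 P) = ev n t * (y * ev n (m12 g) + ev n x * ev n (m22 g)) - ev n x * ev n (m11 P),
      ev n (m21 P) = ev n t * ev n (m21 g) / y &
      ev n (m22 P) = ev n t * ev n (m22 g) - ev n x * ev n (m21 P)].
Proof.
move=> y0 vx [? ? ? ?] vt P; rewrite /P /hconj /mat_mul /mat_scal /hmat /hinv.
by split; ev_simpl; field.
Qed.

Lemma hconj_shift y x g t : y != 0 -> af_valid x -> mat_valid g -> af_valid t ->
  mat_same_ev (mat_mul (mat_mul (unipotent (af_opp x)) (hconj y x g t)) (unipotent x))
              (hconj y af0 g t).
Proof.
move=> y0 vx vg vt.
(* The conjugates are generalized so that [ev_simpl] cannot unfold them. *)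
have := ev_hconj _ y0 vx vg vt; have := ev_hconj _ y0 (af_valid_rat 0) vg vt.
have := mat_valid_hconj y vx vg vt.
move: (hconj y x g t) (hconj y af0 g t) => P W [? ? ? ?] eW eP.
split=> n; have [w11 w12 w21 w22] := eW n; have [p11 p12 p21 p22] := eP n;
  rewrite /unipotent /mat_mul; ev_simpl; rewrite ?w12 ?w22 ?w11 ?w21 p12 p22 p11 p21; ev_simpl; by field.
Qed.

Lemma inK_hconj0 y x g t : y != 0 -> af_valid x -> mat_valid g -> af_valid t ->
  af_in_zhat x -> inK (hconj y x g t) -> inK (hconj y af0 g t).
Proof.
move=> y0 vx vg vt zx KP.
apply: (inK_same_ev (mat_valid_hconj y (af_valid_rat 0) vg vt) (hconj_shift y0 vx vg vt)).
apply: inKM; last exact: inK_unipotent.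
by apply: inKM KP; apply: inK_unipotent; [af_valid_tac | apply: af_in_zhatN].
Qed.

Definition amatN1 : mat2 := amat (af_of_rat (-1)).

Lemma mat_valid_amatN1 : mat_valid amatN1.
Proof. by rewrite /amatN1 /amat; mat_valid_tac. Qed.

Lemma adj_hconj_mul y x g t1 t2 : y != 0 -> af_valid x -> mat_valid g ->
  af_valid t1 -> af_valid t2 ->
  let R := mat_mul (mat_adj (hconj y x g t1)) (hconj y x (mat_mul g amatN1) t2) in
  mat_same_ev R (mat_scal (m22 R) (M2 (af_of_rat (-1)) (af_mul (af_of_rat 2%:R) x) af0 af1)).
Proof.
move=> y0 vx vg vt1 vt2 R.
have vgA := mat_validM vg mat_valid_amatN1.
have eA n : [/\ ev n (m11 (mat_mul g amatN1)) = - ev n (m11 g),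
  ev n (m12 (mat_mul g amatN1)) = ev n (m12 g), ev n (m21 (mat_mul g amatN1)) = - ev n (m21 g)
  & ev n (m22 (mat_mul g amatN1)) = ev n (m22 g)].
  by case: vg => *; rewrite /mat_mul /amatN1 /amat; split; ev_simpl; ring.
have := ev_hconj _ y0 vx vg vt1; have := ev_hconj _ y0 vx vgA vt2.
have := mat_valid_hconj y vx vg vt1; have := mat_valid_hconj y vx vgA vt2.
rewrite /R; move: (hconj y x g t1) (hconj y x (mat_mul g amatN1) t2) => P Q [? ? ? ?] [? ? ? ?] eQ eP.
split=> n; have [p11 p12 p21 p22] := eP n; have [q11 q12 q21 q22] := eQ n;
  have [a11 a12 a21 a22] := eA n; rewrite /mat_scal /mat_adj /mat_mul; ev_simpl;
  rewrite ?q12 ?q22 ?q11 ?q21 ?a11 ?a12 ?a21 ?a22 ?p12 ?p22 ?p11 ?p21; by field.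
Qed.

Lemma af_in_zhat_twice y x g t1 t2 : 0 < y -> af_valid x -> mat_valid g ->
  af_valid t1 -> af_valid t2 ->
  inK (hconj y x g t1) -> inK (hconj y x (mat_mul g amatN1) t2) ->
  af_in_zhat (af_mul (af_of_rat 2%:R) x).
Proof.
move=> y_gt0 vx vg vt1 vt2 KP KQ.
have KR := inKM (inK_adj KP) KQ.
have [e11 e12 e21 e22] := adj_hconj_mul (lt0r_neq0 y_gt0) vx vg vt1 vt2.
move: KR e11 e12 e21 e22; set R := mat_mul (mat_adj _) _; clearbody R.
move=> [vR [uR [_ zR12 _ zc]]] e11 e12 e21 e22; have [v11 v12 v21 vc] := vR.
have v2x : af_valid (af_mul (af_of_rat 2%:R) x) by af_valid_tac.
have uc : zhat_unit (m22 R).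
  apply: (zhat_unit_factor vc (af_validN vc) zc (af_in_zhatN vc zc)).
  apply: (zhat_unit_same_ev (af_valid_det vR) _ _ uR); first by af_valid_tac.
  by move=> n; rewrite /mat_det /af_sub; ev_simpl; rewrite e11 e12 e21 e22 /mat_scal; ev_simpl; ring.
apply: (af_in_zhat_cancel vc v2x uc); apply: (af_in_zhat_same_ev v12 _ _ zR12).
  by af_valid_tac.
by move=> n; rewrite e12 /mat_scal; ev_simpl.
Qed.

Lemma zhat_unitN1 : zhat_unit (af_of_rat (-1)).
Proof. by apply: zhat_unit_rat; rewrite ?invrN1 ?rpredN ?rpred1 ?oppr_eq0 ?oner_eq0. Qed.

Lemma inGL2_mul_amatN1 g : inGL2 g -> inGL2 (mat_mul g amatN1).
Proof.
move=> [vg [e [ve ge1]]]; have [? ? ? ?] := vg.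
split; first exact: mat_validM vg mat_valid_amatN1.
exists (af_mul (af_of_rat (-1)) e); split; first by af_valid_tac.
apply: (af_eq1_same_ev (af_validM (af_valid_det vg) ve) _ _ ge1).
  exact: af_validM (af_valid_det (mat_validM vg mat_valid_amatN1)) (af_validM (af_valid_rat _) ve).
by move=> n; rewrite /mat_mul /amatN1 /amat; ev_simpl; ring.
Qed.

Theorem lemma3p2 (C : numClosedFieldType) (f : mat2 -> C) (y : rat) (x : afin) :
  in_Hfin f ->
  (exists g, inGL2 g /\ f g != 0) ->
  biA_invariant f ->
  0 < y ->
  af_valid x ->
  (forall p : nat, prime p -> af_p_zero p x \/ ~ af_in_Zp p x) ->
  (forall g, inGL2 g -> f g != 0 -> in_phi y x g) ->
  ~ af_val_m1 2 x ->
  forall g, inGL2 g -> f g != 0 -> in_phi y af0 g.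
Proof.
move=> _ _ f_biA y_gt0 vx _ supp_phi not_v2 g g_GL fg_neq0.
have vg : mat_valid g by case: g_GL.
have gA_GL := inGL2_mul_amatN1 g_GL.
have fgA_neq0 : f (mat_mul g amatN1) != 0.
  by have [_ ->] := f_biA _ g (af_valid_rat _) zhat_unitN1 g_GL.
have [t1 [vt1 [ut1 KP]]] := supp_phi g g_GL fg_neq0.
have [t2 [vt2 [_ KQ]]] := supp_phi _ gA_GL fgA_neq0.
have zx : af_in_zhat x.
  apply: af_in_zhat_of_twice not_v2 => //.
  exact: (af_in_zhat_twice y_gt0 vx vg vt1 vt2 KP KQ).
exists t1; split=> //; split=> //.
exact: (inK_hconj0 (lt0r_neq0 y_gt0) vx vg vt1 zx KP).
Qed.
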